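(* Let $n \geq 2$ and let $\mathbb{F}_q$ be a finite field. Every nonzero element of $\operatorname{Mat}_n(\mathbb{F}_q)$ can be written as a sum of two matrices in $\operatorname{SL}_n(\mathbb{F}_q)$. If $n$ is even or $\operatorname{char}(\mathbb{F}_q) = 2$, then the zero matrix can be written as a sum of two matrices in $\operatorname{SL}_n(\mathbb{F}_q)$; otherwise the zero matrix cannot be written as a sum of two matrices in $\operatorname{SL}_n(\mathbb{F}_q)$ but can be written as a sum of three.
   Context: $\operatorname{SL}_n(\mathbb{F}_q)$ is the set of $n\times n$ matrices over $\mathbb{F}_q$ of determinant $1$. *)

From HB Require Import structures.
From mathcomp Require Import all_boot all_order all_algebra all_field.
Set Implicit Arguments. Unset Strict Implicit. Unset Printing Implicit Defensive.
Import GRing.Theory.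
Local Open Scope ring_scope.

Definition inSL (F : fieldType) (n : nat) (A : 'M[F]_n) : Prop := \det A = 1.

From HB Require Import structures.
From mathcomp Require Import all_boot all_algebra ring.
Import GRing.Theory.
Local Open Scope ring_scope.

(* By the rank normal form, a nonzero A equals G D H with G, H invertible and
   D diagonal with D 0 0 = 1, so it is enough to split such a D, for every t,
   into two summands of determinant t.  Splitting n as 2 + 2m or 3 + 2m, D is
   block diagonal with a leading 2x2 or 3x3 block followed by 2x2 blocks: a
   diagonal 2x2 block splits explicitly for any determinant, and so does a
   3x3 block with a nonzero corner.  For the zero matrix, 0 = B + C forces
   det B = (-1)^n det C, whence the condition on n and the characteristic;
   when it fails, 0 = 1 + C + D where C + D = -1 is split as above. *)

Definition mx_of_rows {R : comNzRingType} n (s : seq (seq R)) : 'M[R]_n :=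
  \matrix_(i, j) nth 0 (nth [::] s i) j.

Definition sum2_det {R : comNzRingType} {n} (t : R) (A : 'M[R]_n) :=
  exists X Y : 'M[R]_n, \det X = t /\ \det Y = t /\ A = X + Y.

Section CommutativeRing.
Variable R : comNzRingType.

Lemma det_mx_of_rows2 (a b c d : R) :
  \det (mx_of_rows 2 [:: [:: a; b]; [:: c; d]]) = a * d - b * c.
Proof.
rewrite (expand_det_row _ 0) !big_ord_recl big_ord0 /cofactor !det_mx11 !mxE /=.
by rewrite expr0 expr1; ring.
Qed.

Lemma det_mx_of_rows3 (a b c d e f g h i : R) :
  \det (mx_of_rows 3 [:: [:: a; b; c]; [:: d; e; f]; [:: g; h; i]]) =
  a * (e * i - f * h) - b * (d * i - f * g) + c * (d * h - e * g).
Proof.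
rewrite (expand_det_row _ 0) !big_ord_recl big_ord0 /cofactor.
rewrite !(expand_det_row _ 0) !big_ord_recl !big_ord0 /cofactor !det_mx11 !mxE /=.
by rewrite !expr0 expr1 expr2; ring.
Qed.

Lemma pid_mx_diag n r :
  pid_mx r = diag_mx (\row_(j < n) (j < r)%:R) :> 'M[R]_n.
Proof.
apply/matrixP => i j; rewrite !mxE.
have [-> | ij] := eqVneq i j; first by rewrite !eqxx mulr1n.
by move: ij; rewrite -val_eqE => /negbTE ->; rewrite mulr0n.
Qed.

Lemma sum2_det_block m n (t s : R) (A : 'M[R]_m) (B : 'M[R]_n) :
  sum2_det t A -> sum2_det s B -> sum2_det (t * s) (block_mx A 0 0 B).
Proof.
move=> [XA [YA [dXA [dYA ->]]]] [XB [YB [dXB [dYB ->]]]].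
exists (block_mx XA 0 0 XB), (block_mx YA 0 0 YB).
by rewrite !det_ublock dXA dYA dXB dYB add_block_mx !addr0.
Qed.

Lemma sum2_det_mul n (t : R) (P A Q : 'M[R]_n) :
  sum2_det t A -> sum2_det (\det P * t * \det Q) (P *m A *m Q).
Proof.
move=> [X [Y [dX [dY ->]]]]; exists (P *m X *m Q), (P *m Y *m Q).
by rewrite !det_mulmx dX dY mulmxDr mulmxDl.
Qed.

Lemma sum2_det_diag2 (t : R) (d : 'rV[R]_2) : sum2_det t (diag_mx d).
Proof.
exists (mx_of_rows 2 [:: [:: 0; 1]; [:: - t; d 0 1]]).
exists (mx_of_rows 2 [:: [:: d 0 0; -1]; [:: t; 0]]).
rewrite !det_mx_of_rows2; split; first by ring.
split; first by ring.
apply/matrixP => -[[|[|i]] Hi] // [[|[|j]] Hj] //; rewrite !mxE /=.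
all: by rewrite ?mulr1n ?mulr0n ?add0r ?addr0 ?subrr ?addNr //;
  congr (d 0 _); apply: val_inj.
Qed.

Lemma sum2_det1_diag_pairs m (d : 'rV[R]_m.*2) : sum2_det 1 (diag_mx d).
Proof.
elim: m d => [|m IHm] d.
  by exists 0, 0; rewrite !det_mx00 addr0 !flatmx0.
change (sum2_det 1 (@diag_mx R (2 + m.*2) d)).
rewrite -(@hsubmxK _ 1 2 m.*2 d) diag_mx_row -[1]mulr1.
by apply: sum2_det_block; [exact: sum2_det_diag2 | exact: IHm].
Qed.

Lemma sum2_det_diag_pad s m (t : R) (d : 'rV[R]_(s + m.*2)) :
  sum2_det t (diag_mx (lsubmx d)) -> sum2_det t (diag_mx d).
Proof.
move=> sum_l; rewrite -(hsubmxK d) diag_mx_row -[t]mulr1.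
by apply: sum2_det_block; last exact: sum2_det1_diag_pairs.
Qed.

Lemma sum2_det1_0P n :
  sum2_det 1 (0 : 'M[R]_n) <-> ~~ odd n || (2 \in [pchar R]).
Proof.
have detN n' (A : 'M[R]_n') : \det (- A) = (-1) ^+ odd n' * \det A.
  by rewrite -scaleN1r detZ signr_odd.
split.
  move=> [B [C [dB [dC /esym/eqP]]]]; rewrite addr_eq0 => /eqP EB.
  move: dB; rewrite EB detN dC mulr1; case: (odd n) => //= N1_eq1.
  by rewrite expr1 in N1_eq1; rewrite inE /= mulr2n -{1}N1_eq1 addNr.
move=> h; exists 1%:M, (- 1%:M); rewrite detN det1 mulr1 addrN.
case/orP: h => [/negbTE -> // | pchar2].
by rewrite (oppr_pchar2 pchar2) expr1n.
Qed.

End CommutativeRing.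

Section Field.
Variable F : fieldType.

Lemma sum2_det_diag3 (t : F) (d : 'rV[F]_3) :
  d 0 0 != 0 -> sum2_det t (diag_mx d).
Proof.
move=> d00; pose c := 2 * t / d 0 0.
exists (mx_of_rows 3 [:: [:: 0; 0; t]; [:: 1; d 0 1 - 1; 0]; [:: 0; 1; d 0 2 - c]]).
exists (mx_of_rows 3 [:: [:: d 0 0; 0; - t]; [:: -1; 1; 0]; [:: 0; -1; c]]).
rewrite !det_mx_of_rows3; split; first by ring.
split; first by rewrite /c; field.
apply/matrixP => -[[|[|[|i]]] Hi] // [[|[|[|j]]] Hj] //; rewrite !mxE /=.
all: by rewrite ?mulr1n ?mulr0n ?add0r ?addr0 ?subrr ?addNr ?subrK //;
  congr (d 0 _); apply: val_inj.
Qed.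

Lemma sum2_det_diag n (t : F) (d : 'rV[F]_n.+2) :
  d 0 0 != 0 -> sum2_det t (diag_mx d).
Proof.
have lsubmx00 s m (d' : 'rV[F]_(s.+1 + m)) : lsubmx d' 0 0 = d' 0 0.
  by rewrite mxE; congr (d' 0 _); apply: val_inj.
move: d; rewrite -[n]odd_double_half; case: (odd n) => d d00.
  apply: (@sum2_det_diag_pad _ 3 n./2); apply: sum2_det_diag3.
  by rewrite lsubmx00.
apply: (@sum2_det_diag_pad _ 2 n./2); exact: sum2_det_diag2.
Qed.

Lemma sum2_det_neq0 n (t : F) (A : 'M[F]_n.+2) : A != 0 -> sum2_det t A.
Proof.
move=> A0; have rA : (0 < \rank A)%N by rewrite lt0n mxrank_eq0.
set G := col_ebase A; set H := row_ebase A.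
have dG : \det G != 0 by rewrite -unitfE -unitmxE col_ebase_unit.
have dH : \det H != 0 by rewrite -unitfE -unitmxE row_ebase_unit.
have -> : t = \det G * (t / (\det G * \det H)) * \det H.
  by field; rewrite dG dH.
rewrite -(mulmx_ebase A) -/G -/H; apply: sum2_det_mul.
rewrite pid_mx_diag; apply: sum2_det_diag.
by rewrite mxE rA oner_eq0.
Qed.

End Field.

Theorem theorem3p10 (F : finFieldType) (n : nat) (hn : (2 <= n)%N) :
  (forall A : 'M[F]_n, A != 0 ->
     exists B C : 'M[F]_n, inSL B /\ inSL C /\ A = B + C) /\
  ((~~ odd n \/ (2 \in [pchar F])%N) ->
     exists B C : 'M[F]_n, inSL B /\ inSL C /\ (0 : 'M[F]_n) = B + C) /\
  ((odd n /\ (2 \notin [pchar F])%N) ->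
     (~ exists B C : 'M[F]_n, inSL B /\ inSL C /\ (0 : 'M[F]_n) = B + C) /\
     (exists B C D : 'M[F]_n, [/\ inSL B, inSL C, inSL D &
        (0 : 'M[F]_n) = B + C + D])).
Proof.
case: n hn => [|[|n]] // _.
split; first exact: sum2_det_neq0.
split; first by move=> h; apply/sum2_det1_0P/orP.
move=> [odd_n pchar2]; split.
  by move/sum2_det1_0P; rewrite odd_n (negbTE pchar2).
have [C [D [dC [dD N1_sum]]]] : sum2_det 1 (- 1%:M : 'M[F]_n.+2).
  by apply: sum2_det_neq0; rewrite oppr_eq0 oner_eq0.
exists 1%:M, C, D; split => //; first exact: det1.
by rewrite -addrA -N1_sum addrN.
Qed.
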